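(* For every $\tau\in[0,\infty)$, the Lane–Emden equation $x''(t)+\frac{2}{t}x'(t)+x(t)=0$, $t\in(\tau,\infty)$, is not Ulam stable on $(\tau,\infty)$.
   Context: Ulam stability (scalar case $n=1$, real or complex valued functions): the equation $\alpha(t)x''+\beta(t)x'+\gamma(t)x=f(t)$ is Ulam stable on $I$ if there exists $L>0$ such that for every $\varepsilon>0$ and every $\xi\in C^2(I)$ with $\sup_{t\in I}|\alpha\xi''+\beta\xi'+\gamma\xi-f|\le\varepsilon$, there is a solution $x$ with $\sup_{t\in I}|\xi(t)-x(t)|\le L\varepsilon$. *)

From Stdlib Require Import Reals.
From Coquelicot Require Import Coquelicot.
Open Scope R_scope.

Definition C2_on (I : R -> Prop) (x : R -> R) : Prop :=
  forall t, I t ->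
    ex_derive x t /\ ex_derive (Derive x) t /\ continuous (Derive (Derive x)) t.

Definition ode_lhs (alpha beta gamma x : R -> R) (t : R) : R :=
  alpha t * Derive (Derive x) t + beta t * Derive x t + gamma t * x t.

Definition ulam_stable (I : R -> Prop) (alpha beta gamma f : R -> R) : Prop :=
  exists L : R, 0 < L /\
    forall eps : R, 0 < eps ->
    forall xi : R -> R, C2_on I xi ->
      (forall t, I t -> Rabs (ode_lhs alpha beta gamma xi t - f t) <= eps) ->
      exists x : R -> R, C2_on I x /\
        (forall t, I t -> ode_lhs alpha beta gamma x t = f t) /\
        (forall t, I t -> Rabs (xi t - x t) <= L * eps).

From Stdlib Require Import Reals Lra Psatz FunctionalExtensionality.
From Coquelicot Require Import Coquelicot.
Open Scope R_scope.

(* If x solves x'' + (2/t) x' + x = 0 on (tau, oo) with tau >= 0,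
   then y = t x solves y'' + y = 0, so the energy
     E(t) = (x + t x')^2 + (t x)^2 = y'^2 + y^2
   is constant: every exact solution satisfies |t x(t)| <= sqrt(E), i.e. it
   decays like 1/t.  On the other hand the function
     xi0(t) = (t sin t + cos t) / 4
   is C^2 with residual exactly cos t, hence an approximate solution with
   eps = 1, yet xi0(t) = t/4 at the unbounded sequence of peaks
   t = pi/2 + 2 n pi.  Ulam stability would give a solution x with
   |xi0 - x| <= L, so x(t) >= t/4 - L grows along the peaks, contradicting
   the 1/t decay. *)

Lemma zero_derive_const_halfline (tau : R) (E : R -> R) :
  (forall t, tau < t -> is_derive E t 0) ->
  forall a b, tau < a -> tau < b -> E a = E b.
Proof.
  intros HE a b Ha Hb.
  assert (Hin : forall z, Rmin a b <= z <= Rmax a b -> tau < z).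
  { intros z Hz. unfold Rmin, Rmax in Hz. destruct (Rle_dec a b); lra. }
  destruct (MVT_gen E a b (fun _ => 0)) as [c [_ Hc]].
  - intros z Hz. apply HE, Hin. lra.
  - intros z Hz. apply continuity_pt_filterlim.
    apply (@ex_derive_continuous R_AbsRing R_NormedModule).
    exists 0. now apply HE, Hin.
  - lra.
Qed.

(* The energy of x for the Lane-Emden equation: with y = t x it equals y'^2 + y^2. *)
Definition lane_emden_energy (x : R -> R) (t : R) : R :=
  (x t + t * Derive x t) ^ 2 + (t * x t) ^ 2.

Lemma lane_emden_energy_derive (tau : R) (x : R -> R) :
  0 <= tau -> C2_on (fun t => tau < t) x ->
  (forall t, tau < t ->
     ode_lhs (fun _ => 1) (fun t => 2 / t) (fun _ => 1) x t = 0) ->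
  forall t, tau < t -> is_derive (lane_emden_energy x) t 0.
Proof.
  intros Htau Cx Sx t Ht.
  destruct (Cx t Ht) as [D1 [D2 _]].
  assert (Hdd : Derive (Derive x) t = - (2 / t) * Derive x t - x t).
  { pose proof (Sx t Ht) as S. unfold ode_lhs in S. lra. }
  unfold lane_emden_energy. auto_derive.
  - repeat split; assumption.
  - change (fun s => x s) with x. change (fun s => Derive x s) with (Derive x).
    rewrite Hdd. field. lra.
Qed.

Lemma lane_emden_solution_decay (tau : R) (x : R -> R) :
  0 <= tau -> C2_on (fun t => tau < t) x ->
  (forall t, tau < t ->
     ode_lhs (fun _ => 1) (fun t => 2 / t) (fun _ => 1) x t = 0) ->
  exists C, 0 <= C /\ forall t, tau < t -> (t * x t) ^ 2 <= C.
Proof.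
  intros Htau Cx Sx.
  exists (lane_emden_energy x (tau + 1)). split.
  - unfold lane_emden_energy.
    apply Rplus_le_le_0_compat; apply pow2_ge_0.
  - intros t Ht.
    rewrite <- (zero_derive_const_halfline tau _
                  (lane_emden_energy_derive tau x Htau Cx Sx) t (tau + 1)) by lra.
    unfold lane_emden_energy. pose proof (pow2_ge_0 (x t + t * Derive x t)). lra.
Qed.

Definition xi0 (t : R) : R := (t * sin t + cos t) / 4.

Lemma xi0_derive : Derive xi0 = fun t => t * cos t / 4.
Proof.
  apply functional_extensionality. intros t. apply is_derive_unique.
  unfold xi0. auto_derive; [easy | field].
Qed.

Lemma xi0_derive2 : Derive (Derive xi0) = fun t => (cos t - t * sin t) / 4.
Proof.
  rewrite xi0_derive. apply functional_extensionality. intros t.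
  apply is_derive_unique. auto_derive; [easy | field].
Qed.

Lemma xi0_C2 (I : R -> Prop) : C2_on I xi0.
Proof.
  intros t _. rewrite xi0_derive2, xi0_derive. repeat split.
  - unfold xi0. auto_derive. easy.
  - auto_derive. easy.
  - apply (@ex_derive_continuous R_AbsRing R_NormedModule). auto_derive. easy.
Qed.

Lemma xi0_residual (t : R) : t <> 0 ->
  ode_lhs (fun _ => 1) (fun t => 2 / t) (fun _ => 1) xi0 t = cos t.
Proof.
  intros Ht. unfold ode_lhs. rewrite xi0_derive2, xi0_derive. unfold xi0.
  field. exact Ht.
Qed.

Lemma sin_peaks_unbounded (M : R) :
  exists t, M < t /\ sin t = 1 /\ cos t = 0.
Proof.
  destruct (INR_unbounded M) as [n Hn].
  exists (PI / 2 + 2 * INR n * PI).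
  assert (Hsin : sin (PI / 2 + 2 * INR n * PI) = 1).
  { rewrite sin_period. apply sin_PI2. }
  repeat split; [| exact Hsin |].
  - pose proof PI2_1. pose proof (pos_INR n). nra.
  - pose proof (sin2_cos2 (PI / 2 + 2 * INR n * PI)) as Hsc.
    rewrite Hsin in Hsc. unfold Rsqr in Hsc. nra.
Qed.

Theorem mainTheorem10 (tau : R) (htau : 0 <= tau) :
  ~ ulam_stable (fun t => tau < t) (fun _ => 1) (fun t => 2 / t) (fun _ => 1) (fun _ => 0).
Proof.
  intros [L [HL Hstab]].
  destruct (Hstab 1 Rlt_0_1 xi0 (xi0_C2 _)) as [x [Cx [Sx Bx]]].
  { intros t Ht. rewrite xi0_residual by lra. rewrite Rminus_0_r.
    apply Rabs_le. pose proof (COS_bound t). lra. }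
  destruct (lane_emden_solution_decay tau x htau Cx Sx) as [C [HC Hdecay]].
  (* At a large peak, x(t) >= t/4 - L forces (t x(t))^2 > C. *)
  destruct (sin_peaks_unbounded (4 * (L + C + 2) + tau + 2)) as [t [Ht [Hsin Hcos]]].
  assert (Htau_t : tau < t) by lra.
  pose proof (Bx t Htau_t) as Bt. unfold xi0 in Bt. rewrite Hsin, Hcos in Bt.
  apply Rabs_le_between in Bt.
  pose proof (Hdecay t Htau_t) as Dt.
  assert (Hx : C + 1 <= x t) by lra.
  assert (Htx : C + 1 <= t * x t) by nra.
  nra.
Qed.
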